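(* With $k(c)$ as defined below, $k(c)\sim \dfrac{\log |c+2|^{-1}}{\log 4}$ as $c\to -2$, $c<-2$ (i.e. the ratio of the two sides tends to $1$).
   Context: For real $c<-2$ let $f_c(z)=z^2+c$ and $r_n(c)=f_c^{\circ n}(0)$, so $r_1(c)=c$ and $r_{n+1}(c)=r_n(c)^2+c$. For $-3<c<-2$, $k(c)$ denotes the smallest positive integer $k$ such that $r_{k+1}(c)/r_k(c)\ge 36$. *)

From Stdlib Require Import Reals Lra Lia.
Open Scope R_scope.

Fixpoint r (n : nat) (c : R) : R :=
  match n with
  | O => 0
  | S m => (r m c) ^ 2 + c
  end.

Definition is_k (c : R) (k : nat) : Prop :=
  (1 <= k)%nat /\ r (S k) c / r k c >= 36 /\
  (forall j : nat, (1 <= j < k)%nat -> r (S j) c / r j c < 36).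

(* Write e = -2 - c > 0 and d_m = r_{m+2}(c) - 2.  Since d_{m+1} = d_m^2 + 4 d_m - e,
   the orbit escapes geometrically at rate 4: d_m >= e 4^m and d_m / (1 + d_m) <= 4 e 4^m.
   The ratio r_{k+1}/r_k = r_k + c/r_k first reaches 36 when r_k is about 36, so
   r_k >= 36 and r_{k-1} < 37 pin e 4^k between absolute constants: 1 < e 4^k < 4^6.
   Taking logarithms, k log 4 = log(1/e) + O(1). *)
From Stdlib Require Import Arith Reals Lra Lia Wf_nat.
Open Scope R_scope.

(* The shift by e/3 absorbs the -e in d_{m+1} = d_m^2 + 4 d_m - e, so the induction closes. *)
Lemma r_SS_lower_strong c m : c < -2 ->
  r (S (S m)) c - 2 - (-2 - c) / 3 >= 8 / 3 * (-2 - c) * 4 ^ m.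
Proof.
  intros Hc; induction m as [|m IH].
  - simpl; nra.
  - change (r (S (S (S m))) c) with (r (S (S m)) c ^ 2 + c).
    replace (r (S (S m)) c) with ((r (S (S m)) c - 2) + 2) in * by ring.
    set (d := r (S (S m)) c - 2) in *; simpl pow in *; nra.
Qed.

Lemma r_SS_lower c m : c < -2 -> r (S (S m)) c >= 2 + (-2 - c) * 4 ^ m.
Proof.
  intros Hc.
  pose proof (r_SS_lower_strong c m Hc); pose proof (pow_le 4 m ltac:(lra)).
  nra.
Qed.

Lemma escape_step_ratio d e X : 0 <= d -> 0 <= e -> 0 <= d ^ 2 + 4 * d - e ->
  d <= X * (1 + d) -> d ^ 2 + 4 * d - e <= 4 * X * (1 + (d ^ 2 + 4 * d - e)).
Proof.
  intros Hd He Hd' HX; set (d' := d ^ 2 + 4 * d - e) in *.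
  assert (Hgrowth : d' * (1 + d) <= 4 * d * (1 + d')).
  { destruct (Rle_lt_dec d (1 / 3)).
    - assert (d' * (1 - 3 * d) <= (d ^ 2 + 4 * d) * (1 - 3 * d)) by (unfold d'; nra).
      unfold d' in *; nra.
    - unfold d' in *; nra. }
  assert (4 * d * (1 + d') <= 4 * X * (1 + d) * (1 + d')) by nra.
  apply (Rmult_le_reg_r (1 + d)); nra.
Qed.

Lemma r_SS_upper c m : c < -2 ->
  r (S (S m)) c - 2 <= 4 * (-2 - c) * 4 ^ m * (1 + (r (S (S m)) c - 2)).
Proof.
  intros Hc; induction m as [|m IH].
  - simpl; set (e := -2 - c).
    replace c with (-2 - e) by (unfold e; ring).
    assert (0 < e) by (unfold e; lra).
    assert (0 <= e * (1 + 11 * e + 4 * e ^ 2)) by (apply Rmult_le_pos; nra).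
    nra.
  - pose proof (r_SS_lower c m Hc) as Hcur; pose proof (r_SS_lower c (S m) Hc) as Hnext.
    pose proof (pow_le 4 m ltac:(lra)); pose proof (pow_le 4 (S m) ltac:(lra)).
    change (r (S (S (S m))) c) with (r (S (S m)) c ^ 2 + c) in *.
    replace (r (S (S m)) c) with ((r (S (S m)) c - 2) + 2) in * by ring.
    set (d := r (S (S m)) c - 2) in *.
    replace ((d + 2) ^ 2 + c - 2) with (d ^ 2 + 4 * d - (-2 - c)) in * by ring.
    replace (4 * (-2 - c) * 4 ^ S m) with (4 * (4 * (-2 - c) * 4 ^ m)) by (simpl; ring).
    apply escape_step_ratio; nra.
Qed.

Lemma Rdiv_ge_iff y x a : 0 < x -> (y / x >= a <-> y >= a * x).
Proof.
  intros Hx; pose proof (Rinv_0_lt_compat x Hx); unfold Rdiv.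
  split; intro Hy.
  - replace y with (y * / x * x) by (field; lra); nra.
  - replace a with (a * x * / x) by (field; lra); nra.
Qed.

Lemma k_exists c : -3 < c < -2 -> exists k, is_k c k.
Proof.
  intros Hc.
  set (P j := (1 <= j)%nat /\ r (S j) c / r j c >= 36).
  assert (HPdec : forall j, P j \/ ~ P j).
  { intro j; unfold P.
    destruct (le_lt_dec 1 j), (Rge_dec (r (S j) c / r j c) 36);
      solve [left; auto | right; intros [? ?]; (lia || auto)]. }
  assert (HPex : exists j, P j).
  { destruct (Pow_x_infinity 4 ltac:(rewrite Rabs_right; lra) (39 / (-2 - c)))
      as [N HN].
    specialize (HN N (le_n N)); rewrite Rabs_right in HN by (apply Rle_ge, pow_le; lra).
    assert (HeN : (-2 - c) * 4 ^ N >= 39).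
    { replace 39 with ((-2 - c) * (39 / (-2 - c))) by (field; lra); nra. }
    pose proof (r_SS_lower c N ltac:(lra)).
    exists (S (S N)); split; [lia|].
    change (r (S (S (S N))) c) with (r (S (S N)) c ^ 2 + c).
    apply Rdiv_ge_iff; nra. }
  destruct (dec_inh_nat_subset_has_unique_least_element P HPdec HPex)
    as [k [[[Hk1 Hk2] Hmin] _]].
  exists k; split; [|split]; auto.
  intros j Hj; apply Rnot_ge_lt; intro Hge.
  specialize (Hmin j (conj (proj1 Hj) Hge)); lia.
Qed.

Lemma is_k_scale_gt1 c k : -3 < c < -2 -> is_k c k -> 1 < (-2 - c) * 4 ^ k.
Proof.
  intros Hc [Hk1 [Hk2 _]].
  destruct k as [|[|m]]; [lia| |].
  - replace (r 2 c / r 1 c) with (c + 1) in Hk2 by (simpl; field; lra); lra.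
  - pose proof (r_SS_lower c m ltac:(lra)); pose proof (r_SS_upper c m ltac:(lra)).
    pose proof (pow_le 4 m ltac:(lra)).
    change (r (S (S (S m))) c) with (r (S (S m)) c ^ 2 + c) in Hk2.
    set (x := r (S (S m)) c) in *.
    assert (Hx : 0 < x) by nra.
    apply (proj1 (Rdiv_ge_iff _ x 36 Hx)) in Hk2.
    assert (x >= 36) by (apply Rnot_lt_ge; intro; nra).
    replace (4 ^ S (S m)) with (16 * 4 ^ m) by (simpl; ring).
    nra.
Qed.

Lemma is_k_scale_lt c k : -3 < c < -2 -> is_k c k -> (-2 - c) * 4 ^ k < 4 ^ 6.
Proof.
  intros Hc [Hk1 [_ Hk3]].
  destruct k as [|[|[|m]]]; [lia|simpl; lra|simpl; lra|].
  specialize (Hk3 (S (S m)) ltac:(lia)).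
  pose proof (r_SS_lower c m ltac:(lra)); pose proof (pow_le 4 m ltac:(lra)).
  change (r (S (S (S m))) c) with (r (S (S m)) c ^ 2 + c) in Hk3.
  set (x := r (S (S m)) c) in *.
  assert (Hx : 0 < x) by nra.
  assert (x ^ 2 + c < 36 * x).
  { apply Rnot_ge_lt; intro Hge; apply (proj2 (Rdiv_ge_iff _ x 36 Hx)) in Hge; lra. }
  assert (x < 37) by nra.
  replace (4 ^ S (S (S m))) with (64 * 4 ^ m) by (simpl; ring).
  simpl; nra.
Qed.

Lemma ln_scale_bounds e k : 0 < e -> 1 < e * 4 ^ k < 4 ^ 6 ->
  - ln e < INR k * ln 4 < - ln e + 6 * ln 4.
Proof.
  intros He [Hlo Hhi].
  assert (Hp : 0 < 4 ^ k) by (apply pow_lt; lra).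
  rewrite <- ln_pow by lra.
  replace 6 with (INR 6) by (simpl; ring).
  rewrite <- ln_pow by lra.
  apply ln_increasing in Hlo; [|lra]; apply ln_increasing in Hhi; [|nra].
  rewrite ln_1, ln_mult in * by lra.
  lra.
Qed.

Lemma Rabs_ratio_sub1_lt u t b : 0 < u -> u < t < u + b -> Rabs (t / u - 1) < b / u.
Proof.
  intros Hu Ht.
  replace (t / u - 1) with ((t - u) / u) by (field; lra).
  pose proof (Rinv_0_lt_compat u Hu).
  unfold Rdiv; rewrite Rabs_right by (apply Rle_ge, Rmult_le_pos; lra).
  apply Rmult_lt_compat_r; lra.
Qed.

Theorem lemma1 :
  (forall c : R, -3 < c < -2 -> exists k : nat, is_k c k) /\
  (forall eps : R, eps > 0 ->
     exists delta : R, delta > 0 /\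
       forall (c : R) (k : nat),
         -3 < c < -2 -> -2 - delta < c ->
         is_k c k ->
         Rabs (INR k / (ln (/ Rabs (c + 2)) / ln 4) - 1) < eps).
Proof.
  split; [exact k_exists|].
  intros eps Heps.
  assert (Hln4 : 0 < ln 4) by (rewrite <- ln_1; apply ln_increasing; lra).
  exists (exp (- (6 * ln 4 / eps))); split; [apply Rlt_gt, exp_pos|].
  intros c k Hc Hdelta Hk.
  set (e := -2 - c).
  assert (He : 0 < e) by (unfold e; lra).
  replace (Rabs (c + 2)) with e by (rewrite Rabs_left by lra; unfold e; ring).
  rewrite ln_Rinv by exact He.
  assert (Hlne : ln e < - (6 * ln 4 / eps)).
  { rewrite <- (ln_exp (- (6 * ln 4 / eps))); apply ln_increasing; unfold e; lra. }
  assert (Hu : 6 * ln 4 < eps * - ln e).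
  { replace (6 * ln 4) with (eps * (6 * ln 4 / eps)) by (field; lra); nra. }
  pose proof (ln_scale_bounds e k He
    (conj (is_k_scale_gt1 c k Hc Hk) (is_k_scale_lt c k Hc Hk))) as Hbounds.
  assert (Hu0 : 0 < - ln e) by nra.
  replace (INR k / (- ln e / ln 4)) with (INR k * ln 4 / - ln e) by (field; lra).
  eapply Rlt_le_trans; [exact (Rabs_ratio_sub1_lt _ _ _ Hu0 Hbounds)|].
  apply (Rmult_le_reg_r (- ln e)); [exact Hu0|].
  replace (6 * ln 4 / - ln e * - ln e) with (6 * ln 4) by (field; lra).
  lra.
Qed.
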